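(* Let $\Omega\subset\mathbb{R}^d$ be open and connected, $\mathcal{I}=(0,T)$, and let $\mathbf{f}:\mathbb{R}\to\mathbb{R}^d$ be a smooth flux. Let $\phi:\Omega\times\mathcal{I}\to\mathbb{R}$ be a smooth solution of $\partial_t\phi+\nabla\cdot\mathbf{f}(\phi)=0$, and let $\eta:\mathbb{R}^d\to\mathbb{R}$ be a twice differentiable convex function, evaluated at $\nabla\phi$, i.e. $\eta=\eta(\nabla\phi)$. Then $$\partial_t\eta+\nabla\cdot\mathbf{q}=\mathscr{A},$$ where $$\mathbf{q}=\Big(\frac{\partial\eta}{\partial\nabla\phi}\cdot\nabla\phi\Big)\frac{\partial\mathbf{f}}{\partial\phi},\qquad \mathscr{A}=\big(\mathbf{H}_{\nabla\phi}\eta\,\nabla\phi\big)\cdot\Big(\mathbf{H}_{\mathbf{x}}\phi\,\frac{\partial\mathbf{f}}{\partial\phi}\Big).$$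
   Context: $\frac{\partial\eta}{\partial\nabla\phi}\in\mathbb{R}^d$ denotes the gradient of $\eta$ with respect to its (vector) argument, evaluated at $\nabla\phi$; $\frac{\partial\mathbf{f}}{\partial\phi}=\mathbf{f}'(\phi)\in\mathbb{R}^d$. $(\mathbf{H}_{\mathbf{x}}\phi)_{mn}=\partial^2\phi/\partial x_m\partial x_n$ is the spatial Hessian of $\phi$ and $(\mathbf{H}_{\nabla\phi}\eta)_{mn}=\partial^2\eta/\partial(\nabla_m\phi)\partial(\nabla_n\phi)$ is the Hessian of $\eta$ with respect to its argument, evaluated at $\nabla\phi$. *)

From HB Require Import structures.
From mathcomp Require Import all_boot all_order all_algebra.
From mathcomp Require Import all_classical all_reals all_analysis.
Set Implicit Arguments. Unset Strict Implicit. Unset Printing Implicit Defensive.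
Import Order.TTheory GRing.Theory Num.Theory.
Import numFieldNormedType.Exports.
Local Open Scope classical_set_scope.
Local Open Scope ring_scope.

Fixpoint Ck (R : realType) (V W : normedModType R) (k : nat)
  (U : set V) (F : V -> W) : Prop :=
  match k with
  | 0 => forall p, U p -> {for p, continuous F}
  | k'.+1 => (forall p, U p -> differentiable F p) /\
             (forall v : V, Ck k' U (fun p => 'D_v F p))
  end.

Definition smooth_on (R : realType) (V W : normedModType R)
  (U : set V) (F : V -> W) : Prop := forall k, Ck k U F.

Definition evec (R : realType) (d : nat) (i : 'I_d) : 'rV[R]_d := delta_mx 0 i.

Definition partial (R : realType) (d : nat) (i : 'I_d) (u : 'rV[R]_d -> R)
  (x : 'rV[R]_d) : R := 'D_(evec R i) u x.

Definition dotv (R : realType) (d : nat) (a b : 'rV[R]_d) : R :=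
  \sum_(i < d) a 0 i * b 0 i.

Definition gradv (R : realType) (d : nat) (u : 'rV[R]_d -> R) (x : 'rV[R]_d)
  : 'rV[R]_d := \row_i partial i u x.

Definition hessian (R : realType) (d : nat) (u : 'rV[R]_d -> R) (x : 'rV[R]_d)
  : 'M[R]_d := \matrix_(m, n) partial n (partial m u) x.

Definition twice_differentiable (R : realType) (d : nat) (u : 'rV[R]_d -> R)
  : Prop :=
  (forall y, differentiable u y) /\
  (forall (i : 'I_d) y, differentiable (partial i u) y).

(* Write g = grad phi. Differentiating the conservation law in space and
   exchanging the order of differentiation gives
     d_t g_m = - sum_i (f_i'(phi) d_m g_i + f_i''(phi) g_m g_i).
   The chain rule expresses d_t eta(g) and div q through eta', eta'', the
   spatial Hessian of phi and f', f''. The terms containing f'' cancel, and so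
   do the terms linear in eta' once the symmetry of the Hessian of phi is used;
   the symmetry of the Hessian of eta turns the remainder into A. The symmetry
   of second derivatives is proved from the mean value theorem applied to second
   differences. *)

From HB Require Import structures.
From mathcomp Require Import all_boot all_order all_algebra.
From mathcomp Require Import all_classical all_reals all_analysis.
From mathcomp Require Import ring lra.
Import Order.TTheory GRing.Theory Num.Theory.
Import numFieldNormedType.Exports.
Local Open Scope classical_set_scope.
Local Open Scope ring_scope.

Set Implicit Arguments.
Unset Strict Implicit.
Unset Printing Implicit Defensive.

Section NormedCalculus.
Context {R : numFieldType} {V W : normedModType R}.

Lemma nbhs_norm_shift (x : V) (P : V -> Prop) :
  (\forall y \near x, P y) -> exists2 r, 0 < r & forall w, `|w| < r -> P (x + w).
Proof.
move=> /nbhs_normP[r r_gt0 xrP]; exists r => // w wr; apply: xrP.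
by rewrite /ball_ /= opprD addrA subrr sub0r normrN.
Qed.

Lemma differentiable_remainder_le (G : V -> W) a e :
  differentiable G a -> 0 < e ->
  exists2 r, 0 < r & forall w, `|w| < r -> `|G (a + w) - G a - 'd G a w| <= e * `|w|.
Proof.
move=> /diff_locally/eqaddoP rem e_gt0.
have [r r_gt0 small] := nbhs_norm_shift (rem e e_gt0).
by exists r => // w /small; rewrite add0r /= (addrC a) opprD addrA.
Qed.

Lemma is_derive_line (F : V -> W) p u s :
  derivable F (p + s *: u) u ->
  is_derive s 1 (fun r => F (p + r *: u)) ('D_u F (p + s *: u)).
Proof.
have E : (fun h : R => h^-1 *: (((fun r => F (p + r *: u)) \o shift s) (h *: 1)
                                 - F (p + s *: u)))
  = (fun h => h^-1 *: ((F \o shift (p + s *: u)) (h *: u) - F (p + s *: u))).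
  by apply/funext => h /=; rewrite scalerDl [h%:A]mulr1 addrCA.
by move=> D; apply: DeriveDef; [rewrite /derivable E | rewrite /derive E].
Qed.

End NormedCalculus.

Lemma quadratic_approx_unique {R : realFieldType} (s : R -> R) (x y Cx Cy : R) :
  (forall e, 0 < e -> exists2 del, 0 < del & forall h, 0 < h < del ->
     `|s h - h ^+ 2 * x| <= h ^+ 2 * (e * Cx)) ->
  (forall e, 0 < e -> exists2 del, 0 < del & forall h, 0 < h < del ->
     `|s h - h ^+ 2 * y| <= h ^+ 2 * (e * Cy)) ->
  x = y.
Proof.
move=> approx_x approx_y; apply/eqP; rewrite -subr_eq0 -normr_le0.
apply/ler_addgt0Pr => e e_gt0; rewrite add0r.
pose C := `|Cx| + `|Cy| + 1.
have C_gt0 : 0 < C by rewrite ltr_wpDl // addr_ge0.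
have C_neq0 : C != 0 by rewrite gt_eqF.
have eC_gt0 : 0 < e / C by rewrite divr_gt0.
have [d1 d1_gt0 Hx] := approx_x _ eC_gt0.
have [d2 d2_gt0 Hy] := approx_y _ eC_gt0.
pose h := Num.min d1 d2 / 2.
have h_gt0 : 0 < h by rewrite divr_gt0 // lt_min d1_gt0 d2_gt0.
have /andP[hd1 hd2] : (h < d1) && (h < d2).
  by rewrite -lt_min /h ltr_pdivrMr // ltr_pMr ?ltr1n // lt_min d1_gt0 d2_gt0.
have /Hx {}Hx : 0 < h < d1 by rewrite h_gt0.
have /Hy {}Hy : 0 < h < d2 by rewrite h_gt0.
have E : h ^+ 2 * (x - y) = (s h - h ^+ 2 * y) - (s h - h ^+ 2 * x) by ring.
have := le_trans (ler_normB _ _) (lerD Hy Hx).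
rewrite -E normrM ger0_norm ?sqr_ge0 // -mulrDr ler_pM2l ?exprn_gt0 // -mulrDr.
move=> /le_trans; apply; rewrite -[leRHS](divfK C_neq0) ler_pM2l // /C.
by have := ler_norm Cx; have := ler_norm Cy; lra.
Qed.

Section SymmetricSecondDerivative.
Context {R : realType} {V : normedModType R} (F : V -> R).

Definition second_difference (a u v : V) (h : R) :=
  F (a + h *: v + h *: u) - F (a + h *: u) - (F (a + h *: v) - F a).

Lemma second_differenceC a u v h :
  second_difference a u v h = second_difference a v u h.
Proof. by rewrite /second_difference [a + h *: u + _]addrAC; ring. Qed.

Lemma second_difference_mean_value a u v h : 0 < h ->
  (forall s, 0 <= s <= h ->
     derivable F (a + h *: v + s *: u) u /\ derivable F (a + s *: u) u) ->
  exists2 c, 0 < c < h & second_difference a u v h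
    = h * ('D_u F (a + h *: v + c *: u) - 'D_u F (a + c *: u)).
Proof.
move=> h_gt0 Du.
pose G := (fun r => F (a + h *: v + r *: u)) - (fun r => F (a + r *: u)).
pose dG r := 'D_u F (a + h *: v + r *: u) - 'D_u F (a + r *: u).
have G' s : 0 <= s <= h -> is_derive s 1 G (dG s).
  by move=> /Du[D1 D2]; apply: is_deriveB; apply: is_derive_line.
have [c] : exists2 c, c \in `]0, h[ & G h - G 0 = dG c * (h - 0).
  apply: MVT => // [s /[1!in_itv] /andP[s_gt0 s_lt]|].
    by apply: G'; rewrite !ltW.
  by apply: derivable_within_continuous => s /[1!in_itv] /G'[].
rewrite in_itv /= => c_itv mvt; exists c => //.
by move: mvt; rewrite /G !fctE /= !scale0r !addr0 subr0 mulrC => <-.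
Qed.

Lemma second_difference_approx a u v e : 0 < e ->
  (\forall p \near a, derivable F p u) -> differentiable ('D_u F) a ->
  exists2 del, 0 < del & forall h, 0 < h < del ->
    `|second_difference a u v h - h ^+ 2 * 'd ('D_u F) a v|
      <= h ^+ 2 * (e * (2 * `|u| + `|v|)).
Proof.
move=> e_gt0 /nbhs_norm_shift[r1 r1_gt0 Du] /differentiable_remainder_le.
move=> /(_ e e_gt0)[r2 r2_gt0 rem].
have nu := normr_ge0 u; have nv := normr_ge0 v.
pose K := `|u| + `|v| + 1.
have K_gt0 : 0 < K by rewrite ltr_wpDl // addr_ge0.
exists (Num.min r1 r2 / K) => [|h /andP[h_gt0]].
  by rewrite divr_gt0 // lt_min r1_gt0 r2_gt0.
rewrite ltr_pdivlMr // lt_min => /andP[hr1 hr2].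
have hK : h * (`|u| + `|v|) < h * K by rewrite ltr_pM2l // /K ltrDl.
have seg s : 0 <= s <= h ->
    `|s *: u| <= h * `|u| /\ `|h *: v + s *: u| <= h * (`|u| + `|v|).
  move=> /andP[s_ge0 s_le]; rewrite normrZ ger0_norm //.
  split; first by rewrite ler_wpM2r.
  rewrite (le_trans (ler_normD _ _)) // !normrZ !ger0_norm ?(ltW h_gt0) //.
  by rewrite mulrDr addrC lerD // ler_wpM2r.
have hr1' : h * (`|u| + `|v|) < r1 := lt_trans hK hr1.
have hr2' : h * (`|u| + `|v|) < r2 := lt_trans hK hr2.
have hu : h * `|u| <= h * (`|u| + `|v|) by rewrite ler_pM2l // lerDl.
have [|c /andP[c_gt0 c_lt] ->] := @second_difference_mean_value a u v h h_gt0.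
  move=> s /seg[su hvsu]; rewrite -addrA; split; apply: Du.
    exact: le_lt_trans hvsu hr1'.
  exact: le_lt_trans su (le_lt_trans hu hr1').
have [cu hvcu] : `|c *: u| <= h * `|u| /\ `|h *: v + c *: u| <= h * (`|u| + `|v|).
  by apply: seg; rewrite !ltW.
set L := 'd ('D_u F) a.
have R1 := rem _ (le_lt_trans hvcu hr2').
have R2 := rem _ (le_lt_trans cu (le_lt_trans hu hr2')).
have Lw : L (h *: v + c *: u) = h * L v + L (c *: u) by rewrite linearD linearZ.
rewrite -addrA.
have -> : h * ('D_u F (a + (h *: v + c *: u)) - 'D_u F (a + c *: u)) - h ^+ 2 * L v
   = h * (('D_u F (a + (h *: v + c *: u)) - 'D_u F a - L (h *: v + c *: u))
          - ('D_u F (a + c *: u) - 'D_u F a - L (c *: u))).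
  by rewrite Lw; ring.
rewrite normrM (ger0_norm (ltW h_gt0)) expr2 -mulrA ler_pM2l //.
apply: le_trans (ler_normB _ _) _; apply: le_trans (lerD R1 R2) _.
rewrite -mulrDr mulrCA ler_pM2l //; apply: le_trans (lerD hvcu cu) _; lra.
Qed.

Lemma derive_symmetric a u v :
  (\forall p \near a, derivable F p u) -> (\forall p \near a, derivable F p v) ->
  differentiable ('D_u F) a -> differentiable ('D_v F) a ->
  'D_v ('D_u F) a = 'D_u ('D_v F) a.
Proof.
move=> Fu Fv DFu DFv; rewrite (deriveE v DFu) (deriveE u DFv).
apply: (@quadratic_approx_unique _ (second_difference a u v) _ _
  (2 * `|u| + `|v|) (2 * `|v| + `|u|)) => e e_gt0.
  exact: second_difference_approx.
have [del del_gt0 approx] := @second_difference_approx a v u e e_gt0 Fv DFv.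
by exists del => // h /approx; rewrite second_differenceC.
Qed.

End SymmetricSecondDerivative.

Section ChainRules.
Context {R : numFieldType} {U V W : normedModType R}.

Lemma derive_comp (h : U -> V) (g : V -> W) x w :
  differentiable h x -> differentiable g (h x) ->
  'D_w (g \o h) x = 'd g (h x) ('D_w h x).
Proof.
move=> dh dg; rewrite deriveE; last exact: differentiable_comp.
by rewrite diff_comp // deriveE.
Qed.

End ChainRules.

Section RealValuedCalculus.
Context {R : realType} {U : normedModType R}.

Lemma derive_coord m n (M : U -> 'M[R]_(m, n)) x w i j :
  derivable M x w -> 'D_w M x i j = 'D_w (fun y => M y i j) x.
Proof. by move=> dM; rewrite derive_mx // mxE. Qed.

Lemma differentiable_comp_coord m n (g : R -> 'M[R]_(m, n)) (h : U -> R) x i j :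
  differentiable h x -> differentiable g (h x) ->
  differentiable (fun y => g (h y) i j) x.
Proof.
move=> dh dg; apply: (differentiable_comp (f := g \o h) (g := fun M => M i j)).
  exact: differentiable_comp.
exact: differentiable_coord.
Qed.

Lemma derive_comp_coord m n (g : R -> 'M[R]_(m, n)) (h : U -> R) x w i j :
  differentiable h x -> differentiable g (h x) ->
  'D_w (fun y => g (h y) i j) x = 'D_1 g (h x) i j * 'D_w h x.
Proof.
move=> dh dg; rewrite -(derive_coord (M := g \o h)); last first.
  exact/diff_derivable/differentiable_comp.
by rewrite derive_comp // diff1E // derive1E mxE mulrC.
Qed.

Lemma differentiable_row n (h : 'I_n -> U -> R) x :
  (forall i, differentiable (h i) x) ->
  differentiable (fun y => \row_i h i y : 'rV[R]_n) x.
Proof.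
move=> dh; have -> : (fun y => \row_i h i y : 'rV[R]_n) =
    \sum_(i < n) (fun y => h i y *: (delta_mx 0 i : 'rV[R]_n)).
  apply/funext => y; rewrite fct_sumE [LHS]row_sum_delta.
  by apply: eq_bigr => i _; rewrite mxE.
by apply: differentiable_sum => i; apply: differentiableZl.
Qed.

Lemma derive_comp_rV n (g : 'rV[R]_n -> R) (h : U -> 'rV[R]_n) x w :
  differentiable h x -> differentiable g (h x) ->
  'D_w (g \o h) x = \sum_(m < n) 'D_w (fun y => h y 0 m) x * partial m g (h x).
Proof.
move=> dh dg; rewrite derive_comp // [X in 'd g _ X]row_sum_delta linear_sum.
apply: eq_bigr => m _.
by rewrite linearZ /= -deriveE // derive_coord //; apply: diff_derivable.
Qed.

Lemma derive_sum_pointwise n (h : 'I_n -> U -> R) x v :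
  (forall i, differentiable (h i) x) ->
  'D_v (fun y => \sum_(i < n) h i y) x = \sum_(i < n) 'D_v (h i) x.
Proof.
move=> dh; rewrite -derive_sum; last by move=> i; apply: diff_derivable.
by rewrite fct_sumE.
Qed.

Lemma differentiable_sum_pointwise n (h : 'I_n -> U -> R) x :
  (forall i, differentiable (h i) x) ->
  differentiable (fun y => \sum_(i < n) h i y) x.
Proof. by move=> dh; have := differentiable_sum dh; rewrite fct_sumE. Qed.

Lemma derive_mul_pointwise (f g : U -> R) x v :
  differentiable f x -> differentiable g x ->
  'D_v (fun y => f y * g y) x = f x * 'D_v g x + g x * 'D_v f x.
Proof. by move=> df dg; apply: deriveM; apply: diff_derivable. Qed.

End RealValuedCalculus.

Section Slices.
Context {R : numFieldType} {U V W : normedModType R}.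

Lemma derive_slice1 (G : U * V -> W) y s w :
  'D_w (fun y => G (y, s)) y = 'D_((w, 0) : U * V) G (y, s).
Proof.
rewrite /derive; congr (lim (_ @ 0^')); apply/funext => h /=.
by congr (_ *: (G _ - _)); congr pair; rewrite /= ?scaler0 ?add0r.
Qed.

Lemma derive_slice2 (G : U * V -> W) y s r :
  'D_r (fun s => G (y, s)) s = 'D_((0, r) : U * V) G (y, s).
Proof.
rewrite /derive; congr (lim (_ @ 0^')); apply/funext => h /=.
by congr (_ *: (G _ - _)); congr pair; rewrite /= ?scaler0 ?add0r.
Qed.

End Slices.

Lemma open_cylinder {R : realType} {X : topologicalType} (A : set X) (a b : R) :
  open A -> open [set p : X * R | A p.1 /\ a < p.2 < b].
Proof.
rewrite !openE => A_open [y s] [/= Ay s_in]; exists (A, [set` `]a, b[]) => /=.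
  split; first exact: A_open.
  by apply: open_nbhs_nbhs; split; [exact: itv_open | rewrite /= in_itv].
by move=> [z r] /= [Az]; rewrite in_itv.
Qed.

(* A function phi of (x, t) is handled as G (x, t) on 'rV_d * R: spatial
   partial derivatives are derivatives along (evec i, 0), the time derivative is
   along (0, 1). entropy_flux G f eta k is the k-th component of q and
   entropy_production G f eta is A. *)
Section SpaceTimeSlices.
Context {R : realType} {d : nat}.
Implicit Types (G : 'rV[R]_d * R -> R) (f : R -> 'rV[R]_d) (eta : 'rV[R]_d -> R).
Implicit Types (x : 'rV[R]_d) (s t : R).

Definition space_grad G p : 'rV[R]_d := \row_i 'D_(evec R i, 0) G p.

Definition space_hessian G p : 'M[R]_d :=
  \matrix_(m, n) 'D_(evec R n, 0) ('D_(evec R m, 0) G) p.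

Definition entropy_flux G f eta k p :=
  dotv (gradv eta (space_grad G p)) (space_grad G p) * 'D_1 f (G p) 0 k.

Definition entropy_production G f eta p :=
  dotv (space_grad G p *m (hessian eta (space_grad G p))^T)
       ('D_1 f (G p) *m (space_hessian G p)^T).

Lemma partial_slice G i x s :
  partial i (fun y => G (y, s)) x = 'D_(evec R i, 0) G (x, s).
Proof. exact: derive_slice1. Qed.

Lemma derive1_slice G x s : derive1 (fun s => G (x, s)) s = 'D_(0, 1) G (x, s).
Proof. by rewrite derive1E derive_slice2. Qed.

Lemma gradv_slice G x s : gradv (fun y => G (y, s)) x = space_grad G (x, s).
Proof. by apply/rowP => i; rewrite !mxE partial_slice. Qed.

Lemma hessian_slice G x s : hessian (fun y => G (y, s)) x = space_hessian G (x, s).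
Proof.
apply/matrixP => m n; rewrite [LHS]mxE [RHS]mxE.
have -> : partial m (fun y => G (y, s)) = fun y => 'D_(evec R m, 0) G (y, s).
  by apply/funext => y; rewrite partial_slice.
exact: partial_slice.
Qed.

Lemma derive_time_slice (h : 'rV[R]_d -> R) G x t :
  'D_(0, 1) (h \o space_grad G) (x, t)
  = derive1 (fun s => h (gradv (fun y => G (y, s)) x)) t.
Proof.
have -> : (fun s => h (gradv (fun y => G (y, s)) x))
          = fun s => (h \o space_grad G) (x, s).
  by apply/funext => s; rewrite gradv_slice.
by rewrite derive1_slice.
Qed.

Lemma entropy_flux_slice G f eta k x t :
  'D_(evec R k, 0) (entropy_flux G f eta k) (x, t)
  = partial k (fun y => (dotv (gradv eta (gradv (fun z => G (z, t)) y))
                              (gradv (fun z => G (z, t)) y)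
                         *: derive1 f (G (y, t))) 0 k) x.
Proof.
have -> : (fun y => (dotv (gradv eta (gradv (fun z => G (z, t)) y))
                          (gradv (fun z => G (z, t)) y)
                     *: derive1 f (G (y, t))) 0 k)
          = fun y => entropy_flux G f eta k (y, t).
  by apply/funext => y; rewrite gradv_slice mxE derive1E.
by symmetry; exact: partial_slice.
Qed.

Lemma entropy_production_slice G f eta x t :
  entropy_production G f eta (x, t)
  = dotv (gradv (fun y => G (y, t)) x
            *m (hessian eta (gradv (fun y => G (y, t)) x))^T)
         (derive1 f (G (x, t)) *m (hessian (fun y => G (y, t)) x)^T).
Proof. by rewrite gradv_slice hessian_slice derive1E. Qed.

End SpaceTimeSlices.

Lemma dotv_mulmx_tr {R : realType} n (x y : 'rV[R]_n) (M N : 'M[R]_n) :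
  dotv (x *m M^T) (y *m N^T)
  = \sum_(l < n) (\sum_(m < n) x 0 m * M l m) * (\sum_(k < n) y 0 k * N l k).
Proof.
apply: eq_bigr => l _; rewrite !mxE.
by congr (_ * _); apply: eq_bigr => m _; rewrite mxE.
Qed.

(* With G = grad phi, a = f'(phi), b = f''(phi), e = grad eta (G), S the
   spatial Hessian of phi and H the Hessian of eta, the two sums on the left are
   d_t eta and div q, and the right-hand side is A. *)
Lemma entropy_balance_algebra {R : comRingType} n (G a b e : 'I_n -> R)
    (S H : 'I_n -> 'I_n -> R) :
  (forall i j, S i j = S j i) -> (forall i j, H i j = H j i) ->
  \sum_(m < n) (- \sum_(i < n) (a i * S i m + G i * (b i * G m))) * e m
  + \sum_(k < n) ((\sum_(m < n) e m * G m) * (b k * G k)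
      + a k * \sum_(m < n) (e m * S m k + G m * \sum_(l < n) S l k * H m l))
  = \sum_(l < n) (\sum_(m < n) G m * H l m) * (\sum_(k < n) a k * S l k).
Proof.
move=> S_sym H_sym.
have cancel_a : \sum_(m < n) (\sum_(i < n) a i * S i m) * e m
              = \sum_(k < n) a k * \sum_(m < n) e m * S m k.
  under eq_bigr do rewrite mulr_suml.
  rewrite exchange_big /=; apply: eq_bigr => k _; rewrite mulr_sumr.
  by apply: eq_bigr => m _; rewrite S_sym; ring.
have cancel_b : \sum_(m < n) (\sum_(i < n) G i * (b i * G m)) * e m
              = \sum_(k < n) (\sum_(m < n) e m * G m) * (b k * G k).
  under eq_bigr do rewrite mulr_suml.
  rewrite exchange_big /=; apply: eq_bigr => k _; rewrite mulr_suml.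
  by apply: eq_bigr => m _; ring.
have production : \sum_(k < n) a k * \sum_(m < n) G m * \sum_(l < n) S l k * H m l
    = \sum_(l < n) (\sum_(m < n) G m * H l m) * (\sum_(k < n) a k * S l k).
  under eq_bigr => k _ do (rewrite mulr_sumr; under eq_bigr do rewrite !mulr_sumr).
  under [RHS]eq_bigr => l _ do (rewrite mulr_suml; under eq_bigr do rewrite mulr_sumr).
  rewrite exchange_big /=; under eq_bigr do rewrite exchange_big /=.
  rewrite exchange_big /=; apply: eq_bigr => l _; apply: eq_bigr => m _.
  by apply: eq_bigr => k _; rewrite (H_sym m l); ring.
under eq_bigr do rewrite big_split /= mulNr mulrDl.
under [X in _ + X]eq_bigr do rewrite big_split /= mulrDr.
rewrite sumrN !big_split /= cancel_a cancel_b -production; ring.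
Qed.

Lemma partial_partialC {R : realType} {d : nat} (u : 'rV[R]_d -> R) i j y :
  twice_differentiable u -> partial j (partial i u) y = partial i (partial j u) y.
Proof.
move=> [du ddu]; apply: derive_symmetric; try exact: ddu;
  by apply: filterE => z; apply: diff_derivable.
Qed.

Section EntropyBalance.
Context {R : realType} {d : nat}.
Variables (U : set ('rV[R]_d * R)) (F : 'rV[R]_d * R -> R).
Variables (f : R -> 'rV[R]_d) (eta : 'rV[R]_d -> R).

Local Notation xdir i := ((evec R i, 0) : 'rV[R]_d * R).
Local Notation tdir := ((0, 1) : 'rV[R]_d * R).

Hypothesis U_open : open U.
Hypothesis F_differentiable : forall q, U q -> differentiable F q.
Hypothesis DF_differentiable : forall v q, U q -> differentiable ('D_v F) q.
Hypothesis f_differentiable : forall r, differentiable f r.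
Hypothesis Df_differentiable : forall r, differentiable ('D_1 f) r.
Hypothesis eta_C2 : twice_differentiable eta.
Hypothesis conservation : forall q, U q ->
  'D_tdir F q + \sum_(i < d) 'D_(xdir i) (fun q => f (F q) 0 i) q = 0.

Variable p : 'rV[R]_d * R.
Hypothesis Up : U p.

Lemma near_U : \forall q \near p, U q.
Proof. exact: U_open. Qed.

Lemma derive_swap u v : 'D_v ('D_u F) p = 'D_u ('D_v F) p.
Proof.
have F_derivable w : \forall q \near p, derivable F q w.
  by apply: filterS near_U => q /F_differentiable /diff_derivable.
by apply: derive_symmetric; try exact: DF_differentiable.
Qed.

Lemma conservation_near :
  \forall q \near p, 'D_tdir F q = - \sum_(i < d) 'D_1 f (F q) 0 i * 'D_(xdir i) F q.
Proof.
apply: filterS near_U => q Uq.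
have flux_i i : 'D_(xdir i) (fun q => f (F q) 0 i) q = 'D_1 f (F q) 0 i * 'D_(xdir i) F q.
  exact: derive_comp_coord (F_differentiable Uq) (f_differentiable _).
by have := conservation Uq; rewrite (eq_bigr _ (fun i _ => flux_i i)) => /eqP;
  rewrite addr_eq0 => /eqP.
Qed.

Lemma derive_time_space_grad m :
  'D_tdir ('D_(xdir m) F) p = - \sum_(i < d)
    ('D_1 f (F p) 0 i * 'D_(xdir m) ('D_(xdir i) F) p
     + 'D_(xdir i) F p * ('D_1 ('D_1 f) (F p) 0 i * 'D_(xdir m) F p)).
Proof.
rewrite derive_swap (near_eq_derive _ conservation_near).
have d_speed i : differentiable (fun q => 'D_1 f (F q) 0 i) p.
  exact: differentiable_comp_coord (F_differentiable Up) (Df_differentiable _).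
have d_term i : differentiable (fun q => 'D_1 f (F q) 0 i * 'D_(xdir i) F q) p.
  exact: differentiableM (d_speed i) (DF_differentiable _ Up).
rewrite deriveN; last exact/diff_derivable/differentiable_sum_pointwise.
rewrite derive_sum_pointwise //; congr (- _); apply: eq_bigr => i _.
rewrite derive_mul_pointwise //; try exact: DF_differentiable.
by rewrite (derive_comp_coord (g := 'D_1 f)) //; exact: F_differentiable.
Qed.

Lemma derive_comp_space_grad (g : 'rV[R]_d -> R) v :
  differentiable g (space_grad F p) ->
  'D_v (g \o space_grad F) p
  = \sum_(m < d) 'D_v ('D_(xdir m) F) p * partial m g (space_grad F p).
Proof.
move=> dg; rewrite derive_comp_rV //; last first.
  by apply: differentiable_row => i; exact: DF_differentiable.
apply: eq_bigr => m _; congr (_ * _); congr (derive _ p v).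
by apply/funext => q; rewrite mxE.
Qed.

Lemma derive_entropy_flux k :
  'D_(xdir k) (entropy_flux F f eta k) p
  = (\sum_(m < d) partial m eta (space_grad F p) * 'D_(xdir m) F p)
      * ('D_1 ('D_1 f) (F p) 0 k * 'D_(xdir k) F p)
    + 'D_1 f (F p) 0 k * \sum_(m < d)
      (partial m eta (space_grad F p) * 'D_(xdir k) ('D_(xdir m) F) p
       + 'D_(xdir m) F p * \sum_(l < d) 'D_(xdir k) ('D_(xdir l) F) p
                                      * partial l (partial m eta) (space_grad F p)).
Proof.
have [deta ddeta] := eta_C2.
have d_grad : differentiable (space_grad F) p.
  by apply: differentiable_row => i; exact: DF_differentiable.
have d_eta_m m : differentiable (partial m eta \o space_grad F) p.
  exact: differentiable_comp.
have -> : entropy_flux F f eta k = fun q =>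
    (\sum_(m < d) (partial m eta \o space_grad F) q * 'D_(xdir m) F q)
    * 'D_1 f (F q) 0 k.
  apply/funext => q; rewrite /entropy_flux; congr (_ * _).
  by apply: eq_bigr => m _; rewrite !mxE.
rewrite derive_mul_pointwise; first last.
- exact: differentiable_comp_coord (F_differentiable Up) (Df_differentiable _).
- apply: differentiable_sum_pointwise => m.
  by apply: differentiableM; [exact: d_eta_m | exact: DF_differentiable].
rewrite (derive_comp_coord (g := 'D_1 f)) //; last exact: F_differentiable.
congr (_ + _); rewrite derive_sum_pointwise; last first.
  move=> m; apply: differentiableM; [exact: d_eta_m | exact: DF_differentiable].
congr (_ * _); apply: eq_bigr => m _.
rewrite derive_mul_pointwise //; last exact: DF_differentiable.
by rewrite derive_comp_space_grad.
Qed.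

Lemma entropy_production_expand :
  entropy_production F f eta p = \sum_(l < d)
    (\sum_(m < d) 'D_(xdir m) F p * partial m (partial l eta) (space_grad F p))
    * (\sum_(k < d) 'D_1 f (F p) 0 k * 'D_(xdir k) ('D_(xdir l) F) p).
Proof.
rewrite /entropy_production dotv_mulmx_tr; apply: eq_bigr => l _.
by congr (_ * _); apply: eq_bigr => m _; rewrite !mxE.
Qed.

Lemma entropy_balance :
  'D_tdir (eta \o space_grad F) p + \sum_(k < d) 'D_(xdir k) (entropy_flux F f eta k) p
  = entropy_production F f eta p.
Proof.
rewrite derive_comp_space_grad; last exact: eta_C2.1.
under eq_bigr do rewrite derive_time_space_grad.
under [X in _ + X]eq_bigr do rewrite derive_entropy_flux.
rewrite entropy_production_expand.
apply: (@entropy_balance_algebra _ d (fun m => 'D_(xdir m) F p)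
  (fun k => 'D_1 f (F p) 0 k) (fun k => 'D_1 ('D_1 f) (F p) 0 k)
  (fun m => partial m eta (space_grad F p))
  (fun m k => 'D_(xdir k) ('D_(xdir m) F) p)
  (fun m l => partial l (partial m eta) (space_grad F p))) => i j.
  exact: derive_swap.
exact: partial_partialC.
Qed.

End EntropyBalance.

Theorem lemma1 (R : realType) (d : nat) (Omega : set 'rV[R]_d) (T : R)
  (f : R -> 'rV[R]_d) (phi : 'rV[R]_d -> R -> R) (eta : 'rV[R]_d -> R) :
  open Omega -> connected Omega ->
  smooth_on setT f ->
  smooth_on [set p : 'rV[R]_d * R | Omega p.1 /\ 0 < p.2 < T]
            (fun p => phi p.1 p.2) ->
  (forall x t, Omega x -> 0 < t < T ->
     derive1 (fun s => phi x s) t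
     + \sum_(i < d) partial i (fun y => f (phi y t) 0 i) x = 0) ->
  twice_differentiable eta ->
  convex_function setT eta ->
  let g := fun x t => gradv (fun y => phi y t) x in
  let q := fun x t =>
     dotv (gradv eta (g x t)) (g x t) *: (derive1 f (phi x t)) in
  let A := fun x t =>
     dotv ((g x t) *m (hessian eta (g x t))^T)
          ((derive1 f (phi x t)) *m (hessian (fun y => phi y t) x)^T) in
  forall x t, Omega x -> 0 < t < T ->
    derive1 (fun s => eta (g x s)) t
    + \sum_(k < d) partial k (fun y => q y t 0 k) x = A x t.
Proof.
move=> Omega_open _ f_smooth phi_smooth pde eta_C2 _ g q A x t Ox t_in.
pose U := [set p : 'rV[R]_d * R | Omega p.1 /\ 0 < p.2 < T].
pose F (p : 'rV[R]_d * R) := phi p.1 p.2.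
have conservation p : U p ->
    'D_(0, 1) F p + \sum_(i < d) 'D_(evec R i, 0) (fun q => f (F q) 0 i) p = 0.
  case: p => y s [/= Oy s_in]; rewrite -[RHS](pde _ _ Oy s_in) (derive1_slice F).
  congr (_ + _); apply: eq_bigr => i _.
  by symmetry; exact: (partial_slice (fun q => f (F q) 0 i)).
have Uxt : U (x, t) by [].
have := entropy_balance (open_cylinder Omega_open)
  (fun p Up => (phi_smooth 1%N).1 p Up) (fun v p Up => ((phi_smooth 2%N).2 v).1 p Up)
  (fun r => (f_smooth 1%N).1 r I) (fun r => ((f_smooth 2%N).2 1).1 r I)
  eta_C2 conservation Uxt.
by rewrite derive_time_slice (eq_bigr _ (fun k _ => entropy_flux_slice F f eta k x t))
  entropy_production_slice.
Qed.
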